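(* Algorithm $R_A$ (described in the context) is strategyproof over the domain of all monotonic profiles (for $n$ agents and alternatives $\{A,B\}$) that admit a unique stable assignment.
   Context: Agents $V=\{v_1,\dots,v_n\}$; two alternatives $A,B$. Each agent $v_i$ has a strict total order $\succ_i$ on $\{A,B\}\times\{1,\dots,n\}$, where $(S,j)$ means being in the community adopting $S$ of size $j$; it is monotonic if $(S,j)\succ_i(S,k)$ whenever $k<j$. An assignment is a map $f:V\to\{A,B\}$; $v_i$ prefers $f$ to $g$ if $(f(v_i),|f^{-1}(f(v_i))|)\succ_i(g(v_i),|g^{-1}(g(v_i))|)$. An assignment $f$ is stable if there is no assignment $f'\neq f$ such that every agent $v_i$ with $f'(v_i)\neq f(v_i)$ prefers $f'$ to $f$. Algorithm $R_A$: set $V_A=V$, $V_B=\emptyset$, $a=|V_A|$, $b=|V_B|$. Repeat: let $k$ be the largest $j\in\{1,\dots,a\}$ with $|\{v_i\in V_A:(B,b+j)\succ_i(A,a)\}|\ge j$, or $k=0$ if none exists. If $k=0$, output $f$ with $f^{-1}(A)=V_A$, $f^{-1}(B)=V_B$. Otherwise let $X=\{v_i\in V_A:(B,b+k)\succ_i(A,a)\}$, move $X$ from $V_A$ to $V_B$, update $a,b$, and repeat. A rule $R$ is strategyproof over a domain $D$ of profiles if for every $V\in D$ with $f=R(V)$ there is no agent $v_i$ and monotonic order $\succ_i'$ such that, with $V'$ obtained from $V$ by replacing $\succ_i$ by $\succ_i'$ and $f'=R(V')$, agent $v_i$ prefers $f'$ to $f$ according to her true order $\succ_i$. *)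

From HB Require Import structures.
From mathcomp Require Import all_boot.
Set Implicit Arguments. Unset Strict Implicit. Unset Printing Implicit Defensive.

Inductive alt := A | B.
Definition alt2bool (x : alt) : bool := if x is A then true else false.
Definition bool2alt (b : bool) : alt := if b then A else B.
Lemma alt2boolK : cancel alt2bool bool2alt. Proof. by case. Qed.
HB.instance Definition _ := Finite.copy alt (can_type alt2boolK).

(* A preference of an agent: r (S,j) (T,k) means (S,j) is strictly preferred
   to (T,k), i.e. (S,j) >_i (T,k). Only pairs with 1 <= j <= n are relevant. *)
Definition pref := rel (alt * nat).

Definition indom (n : nat) (x : alt * nat) : bool := (0 < x.2 <= n).

Definition strict_total_order (n : nat) (r : pref) : Prop :=
  [/\ (forall x, indom n x -> ~~ r x x),
      (forall x y z, indom n x -> indom n y -> indom n z ->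
          r x y -> r y z -> r x z)
    & (forall x y, indom n x -> indom n y -> x != y -> r x y || r y x)].

Definition monotonic (n : nat) (r : pref) : Prop :=
  strict_total_order n r /\
  (forall S j k, 0 < k -> k < j -> j <= n -> r (S, j) (S, k)).

Definition profile (n : nat) := 'I_n -> pref.

Definition assignment (n : nat) := {ffun 'I_n -> alt}.

Definition csize n (f : assignment n) (i : 'I_n) : nat :=
  #|[pred j | f j == f i]|.

Definition prefers n (r : pref) (i : 'I_n) (f g : assignment n) : bool :=
  r (f i, csize f i) (g i, csize g i).

Definition stable n (P : profile n) (f : assignment n) : Prop :=
  ~ exists f' : assignment n,
      f' != f /\ (forall i, f' i != f i -> prefers (P i) i f' f).

(* state: the current set V_A; V_B is its complement; a = #|V_A|, b = n - a *)
Section RA.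
Variables (n : nat) (P : profile n).

Definition RA_X (VA : {set 'I_n}) (j : nat) : {set 'I_n} :=
  [set v in VA | P v (B, (n - #|VA|) + j) (A, #|VA|)].

(* the largest j in {1..a} with |X_j| >= j, or 0 if none *)
Definition RA_k (VA : {set 'I_n}) : nat :=
  \max_(j < #|VA|.+1 | (0 < (j : nat)) && ((j : nat) <= #|RA_X VA j|)) (j : nat).

Definition RA_step (VA : {set 'I_n}) : {set 'I_n} :=
  if RA_k VA == 0 then VA else VA :\: RA_X VA (RA_k VA).

(* Each non-terminal step removes at least one agent from V_A, so after n
   iterations the loop has terminated (a terminal state is a fixed point). *)
Definition RA_final : {set 'I_n} := iter n RA_step [set: 'I_n].

Definition RA : assignment n :=
  [ffun v => if v \in RA_final then A else B].
End RA.

Definition update n (P : profile n) (i : 'I_n) (r' : pref) : profile n :=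
  fun j => if j == i then r' else P j.

Definition monotonic_profile n (P : profile n) : Prop :=
  forall i, monotonic n (P i).

Definition unique_stable_domain n (P : profile n) : Prop :=
  monotonic_profile P /\ exists! f : assignment n, stable P f.

Definition strategyproof_over n (R : profile n -> assignment n)
    (D : profile n -> Prop) : Prop :=
  forall P, D P -> forall (i : 'I_n) (r' : pref), monotonic n r' ->
    ~~ prefers (P i) i (R (update P i r')) (R P).

From mathcomp Require Import all_boot zify.
Set Implicit Arguments. Unset Strict Implicit. Unset Printing Implicit Defensive.

(* An assignment is determined by its A-community V, and [assignA V] is stable
   as soon as no nonempty coalition inside V gains by jointly switching to B
   ([A_stable]) and none outside V gains by jointly switching to A
   ([B_stable]): by monotonicity the movers A -> B of any deviation already
   block on their own, and if there are none, so do the movers B -> A.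
   R_A ends in the largest A-stable set and B-stability is an invariant of its
   run, so R_A returns the unique stable assignment.
   Suppose agent i misreports. If she stays in V_A in both runs, the runs
   coincide; if she ends in V_B in both, each final V_A is A-stable for the
   other profile too, so the two are equal. If she switches sides and gains,
   her own gain rules out the blocking coalitions containing her, so the
   reported outcome is stable for the true profile, contradicting uniqueness. *)

Lemma indomE n (S : alt) j : indom n (S, j) = (0 < j <= n).
Proof. by []. Qed.

Section MonotonicOrder.
Variables (n : nat) (r : pref).
Hypothesis Mr : monotonic n r.

Lemma monotonic_irr x : indom n x -> ~~ r x x.
Proof. by case: Mr => -[irr _ _] _; apply: irr. Qed.

Lemma monotonic_trans x y z : indom n x -> indom n y -> indom n z ->
  r x y -> r y z -> r x z.
Proof. by case: Mr => -[_ trans _] _; apply: trans. Qed.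

Lemma monotonic_asym x y : indom n x -> indom n y -> r x y -> ~~ r y x.
Proof.
move=> dx dy rxy; apply/negP => ryx.
by move: (monotonic_irr dx); rewrite (monotonic_trans dx dy dx rxy ryx).
Qed.

Lemma monotonic_weaken S T j j' k k' :
  0 < j -> j <= j' -> j' <= n -> 0 < k' -> k' <= k -> k <= n ->
  r (S, j) (T, k) -> r (S, j') (T, k').
Proof.
have [_ grow] := Mr.
move=> j0 jj' j'n k'0 k'k kn rjk.
have r_j'k : r (S, j') (T, k).
  case: (ltngtP j j') jj' => // [lt_jj' _ | <- //].
  apply: monotonic_trans (grow S _ _ j0 lt_jj' j'n) rjk; rewrite indomE; lia.
case: (ltngtP k' k) k'k => // [lt_k'k _ | -> //].
apply: monotonic_trans r_j'k (grow T _ _ k'0 lt_k'k kn); rewrite indomE; lia.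
Qed.

Lemma monotonic_nogain S j k : 0 < j -> j <= k -> k <= n -> ~~ r (S, j) (S, k).
Proof.
move=> j0 jk kn; apply/negP => rjk.
have k0 : 0 < k by lia.
have dk : indom n (S, k) by rewrite indomE k0.
by move: (monotonic_irr dk); rewrite (monotonic_weaken j0 jk kn k0 (leqnn k) kn rjk).
Qed.

End MonotonicOrder.

Lemma iter_shrinking_fixed (T : finType) (f : {set T} -> {set T}) (X : {set T}) :
  (forall V, f V \subset V) -> f (iter #|X| f X) = iter #|X| f X.
Proof.
move=> shrink.
have fixed_or_small m : f (iter m f X) = iter m f X \/ #|iter m f X| + m <= #|X|.
  elim: m => [|m [fixm | IH]]; first by right; rewrite addn0.
    by left; rewrite iterS fixm.
  rewrite iterS; have [e | ne] := eqVneq (f (iter m f X)) (iter m f X).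
    by left; rewrite e.
  right; have := proper_card (_ : f (iter m f X) \proper iter m f X).
  by rewrite properEneq ne shrink => /(_ isT); lia.
have [//|] := fixed_or_small #|X|.
rewrite -[X in _ <= X]add0n leq_add2r leqn0 cards_eq0 => /eqP ->.
by apply/eqP; rewrite -subset0.
Qed.

Section Algorithm.
Variables (n : nat) (Q : profile n).
Implicit Type V : {set 'I_n}.

Lemma RA_X_sub V j : RA_X Q V j \subset V.
Proof. by apply/subsetP => v; rewrite inE => /andP[]. Qed.

Lemma RA_k_max V j : 0 < j -> j <= #|V| -> j <= #|RA_X Q V j| -> j <= RA_k Q V.
Proof.
move=> j0 jV jX; rewrite /RA_k.
have jo : j < #|V|.+1 by [].
by apply: (leq_bigmax_cond (Ordinal jo)); rewrite /= j0 jX.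
Qed.

Lemma RA_k_spec V : 0 < RA_k Q V ->
  RA_k Q V <= #|V| /\ RA_k Q V <= #|RA_X Q V (RA_k Q V)|.
Proof.
rewrite /RA_k.
set K := fun x => (x == 0) || ((x <= #|V|) && (x <= #|RA_X Q V x|)).
suff: K (\max_(j < #|V|.+1 | (0 < (j : nat)) && ((j : nat) <= #|RA_X Q V j|)) (j : nat)).
  by rewrite /K; case/orP => [/eqP -> // | /andP[]].
apply: (big_ind K) => [|x y|j /andP[_ jX]]; first by rewrite /K eqxx.
  by rewrite /maxn; case: (x < y).
by rewrite /K -ltnS ltn_ord jX orbT.
Qed.

Lemma RA_step0 V : RA_k Q V = 0 -> RA_step Q V = V.
Proof. by rewrite /RA_step => ->. Qed.

Lemma RA_stepS V : 0 < RA_k Q V -> RA_step Q V = V :\: RA_X Q V (RA_k Q V).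
Proof. by rewrite /RA_step; case: eqP => // ->. Qed.

Lemma RA_step_sub V : RA_step Q V \subset V.
Proof. by rewrite /RA_step; case: ifP => // _; apply: subsetDl. Qed.

Lemma card_RA_step V : 0 < RA_k Q V ->
  #|RA_step Q V| = #|V| - #|RA_X Q V (RA_k Q V)|.
Proof. by move=> k0; rewrite RA_stepS // cardsD (setIidPr (RA_X_sub _ _)). Qed.

Lemma RA_final_k0 : RA_k Q (RA_final Q) = 0.
Proof.
have := iter_shrinking_fixed [set: 'I_n] RA_step_sub.
rewrite cardsT card_ord -/(RA_final Q).
case: (posnP (RA_k Q (RA_final Q))) => // k0.
have [_ kX] := RA_k_spec k0.
move/(congr1 (fun U : {set 'I_n} => #|U|)); rewrite card_RA_step //.
have := subset_leq_card (RA_X_sub (RA_final Q) (RA_k Q (RA_final Q))); lia.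
Qed.

End Algorithm.

Definition assignA n (V : {set 'I_n}) : assignment n :=
  [ffun v => if v \in V then A else B].

Lemma RA_assignA n (P : profile n) : RA P = assignA (RA_final P).
Proof. by []. Qed.

Lemma assignA_inj n : injective (@assignA n).
Proof.
move=> V W /ffunP eVW; apply/setP => v.
by move: (eVW v); rewrite !ffunE; do 2 case: (_ \in _).
Qed.

Lemma assignA_preim n (g : assignment n) : assignA [set v | g v == A] = g.
Proof. by apply/ffunP => v; rewrite !ffunE inE; case: (g v). Qed.

Lemma leq_card_ord n (V : {set 'I_n}) : #|V| <= n.
Proof. by apply: leq_trans (max_card _) _; rewrite card_ord. Qed.

Lemma card_setC_ord n (V : {set 'I_n}) : #|~: V| = n - #|V|.
Proof. by have := cardsC V; rewrite card_ord; lia. Qed.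

Lemma csize_assignA n (V : {set 'I_n}) v :
  csize (assignA V) v = if v \in V then #|V| else n - #|V|.
Proof.
rewrite /csize ffunE -card_setC_ord.
by case: ifP => vV; apply: eq_card => j; rewrite !inE ffunE; case: (j \in V).
Qed.

Lemma indom_csize n (f : assignment n) v : indom n (f v, csize f v).
Proof.
rewrite indomE /csize (leq_trans (max_card _)) ?card_ord ?andbT //.
by apply/card_gt0P; exists v; rewrite inE.
Qed.

Definition A_stable n (Q : profile n) (V : {set 'I_n}) : Prop :=
  forall S : {set 'I_n}, S \subset V -> S != set0 ->
    ~ (forall v, v \in S -> Q v (B, n - #|V| + #|S|) (A, #|V|)).

Definition B_stable n (Q : profile n) (V : {set 'I_n}) : Prop :=
  forall T : {set 'I_n}, T \subset ~: V -> T != set0 ->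
    ~ (forall v, v \in T -> Q v (A, #|V| + #|T|) (B, n - #|V|)).

Lemma A_stable_agree n (Q Q' : profile n) (V : {set 'I_n}) :
  (forall v, v \in V -> Q v = Q' v) -> A_stable Q V -> A_stable Q' V.
Proof.
move=> eQ stV S SV S0 gain; apply: (stV S SV S0) => v vS.
by rewrite eQ ?(subsetP SV) ?gain.
Qed.

Lemma B_stable_agree n (Q Q' : profile n) (V : {set 'I_n}) :
  (forall v, v \in ~: V -> Q v = Q' v) -> B_stable Q V -> B_stable Q' V.
Proof.
move=> eQ stV T TV T0 gain; apply: (stV T TV T0) => v vT.
by rewrite eQ ?(subsetP TV) ?gain.
Qed.

Section Stability.
Variables (n : nat) (Q : profile n).
Hypothesis MQ : monotonic_profile Q.
Implicit Types (S T U V W : {set 'I_n}).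

Lemma A_stable_weaken V S j k : A_stable Q V -> S \subset V -> S != set0 ->
  0 < j -> j <= n - #|V| + #|S| -> #|V| <= k -> k <= n ->
  ~ (forall v, v \in S -> Q v (B, j) (A, k)).
Proof.
move=> stV SV S0 j0 jS Vk kn gain; apply: (stV S SV S0) => v vS.
have Vn := leq_card_ord V; have SV_card := subset_leq_card SV.
have S_pos : 0 < #|S| by rewrite card_gt0.
have [Sn V0] : n - #|V| + #|S| <= n /\ 0 < #|V| by lia.
exact: (monotonic_weaken (MQ v) j0 jS Sn V0 Vk kn (gain v vS)).
Qed.

Lemma B_stable_weaken V T j k : B_stable Q V -> T \subset ~: V -> T != set0 ->
  0 < j -> j <= #|V| + #|T| -> n - #|V| <= k -> k <= n ->
  ~ (forall v, v \in T -> Q v (A, j) (B, k)).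
Proof.
move=> stV TV T0 j0 jT Vk kn gain; apply: (stV T TV T0) => v vT.
have VC := cardsC V; rewrite card_ord in VC; have TV_card := subset_leq_card TV.
have T_pos : 0 < #|T| by rewrite card_gt0.
have [Tn V0] : #|V| + #|T| <= n /\ 0 < n - #|V| by lia.
exact: (monotonic_weaken (MQ v) j0 jT Tn V0 Vk kn (gain v vT)).
Qed.

Lemma stable_assignA V : A_stable Q V -> B_stable Q V -> stable Q (assignA V).
Proof.
move=> stA stB [g [gV mover]].
set W : {set 'I_n} := [set v | g v == A]; rewrite -(assignA_preim g) -/W in gV mover.
have mover_gain v : v \in W -> v \notin V -> Q v (A, #|W|) (B, n - #|V|).
  move=> vW vV; move: (mover v); rewrite /prefers !csize_assignA !ffunE vW.
  by rewrite (negbTE vV); apply.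
have mover_loss v : v \notin W -> v \in V -> Q v (B, n - #|W|) (A, #|V|).
  move=> vW vV; move: (mover v); rewrite /prefers !csize_assignA !ffunE vV.
  by rewrite (negbTE vW); apply.
have Vn := leq_card_ord V; have Wn := leq_card_ord W.
have [S0 | S0] := eqVneq (V :\: W) set0.
- have VW : V \subset W by rewrite -setD_eq0 S0.
  have T0 : W :\: V != set0.
    apply: contraNneq gV => /eqP; rewrite setD_eq0 => WV.
    by apply/eqP; congr assignA; apply/eqP; rewrite eqEsubset WV VW.
  have TV : W :\: V \subset ~: V by apply/subsetP => v /setDP[_ vV]; rewrite inE.
  have W_card := cardsID V W; rewrite (setIidPr VW) in W_card.
  have T_pos : 0 < #|W :\: V| by rewrite card_gt0.
  have W_pos : 0 < #|W| by lia.
  apply: (B_stable_weaken stB TV T0 W_pos _ (leqnn _) (leq_subr _ _)); first lia.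
  by move=> v /setDP[vW vV]; apply: mover_gain.
- have SW : V :\: W \subset ~: W by apply/subsetP => v /setDP[_ vW]; rewrite inE.
  have := subset_leq_card SW; have := cardsC W; rewrite card_ord => WC SW_card.
  have V_card := cardsID W V; have IW_card := subset_leq_card (subsetIr V W).
  have S_pos : 0 < #|V :\: W| by rewrite card_gt0.
  have j_pos : 0 < n - #|W| by lia.
  have j_le : n - #|W| <= n - #|V| + #|V :\: W| by lia.
  apply: (A_stable_weaken stA (subsetDl V W) S0 j_pos j_le (leqnn _) Vn).
  by move=> v /setDP[vV vW]; apply: mover_loss.
Qed.

Lemma RA_final_A_stable : A_stable Q (RA_final Q).
Proof.
move=> S SV S0 gain.
have S_pos : 0 < #|S| by rewrite card_gt0.
have SX : S \subset RA_X Q (RA_final Q) #|S|.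
  by apply/subsetP => v vS; rewrite inE (subsetP SV v vS) gain.
have := RA_k_max S_pos (subset_leq_card SV) (subset_leq_card SX).
by rewrite RA_final_k0 leqNgt S_pos.
Qed.

Lemma A_stable_sub_step U W : A_stable Q W -> W \subset U -> W \subset RA_step Q U.
Proof.
move=> stW WU; have [k0 | k_pos] := posnP (RA_k Q U); first by rewrite RA_step0.
have [_ kX] := RA_k_spec k_pos.
rewrite RA_stepS //; set k := RA_k Q U in k_pos kX *; set X := RA_X Q U k in kX *.
have [WX0 | WX0] := eqVneq (W :&: X) set0.
  apply/subsetP => w wW; rewrite in_setD (subsetP WU w wW) andbT.
  apply/negP => wX; have : w \in W :&: X by rewrite inE wW.
  by rewrite WX0 inE.
have WX_pos : 0 < #|W :&: X| by rewrite card_gt0.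
have W_card := cardsID X W.
have XU : X \subset U := RA_X_sub Q U k.
have WX_card := subset_leq_card (setSD X WU).
have UX_card : #|U :\: X| = #|U| - #|X| by rewrite cardsD (setIidPr XU).
have X_card := subset_leq_card XU; have WU_card := subset_leq_card WU.
have Un := leq_card_ord U.
have j_pos : 0 < n - #|U| + k by lia.
have j_le : n - #|U| + k <= n - #|W| + #|W :&: X| by lia.
exfalso; apply: (A_stable_weaken stW (subsetIl W X) WX0 j_pos j_le WU_card Un).
by move=> v /setIP[_]; rewrite inE => /andP[].
Qed.

Lemma A_stable_sub_RA_final W : A_stable Q W -> W \subset RA_final Q.
Proof.
move=> stW; suff sub_iter m : W \subset iter m (RA_step Q) [set: 'I_n] by exact: sub_iter.
elim: m => [|m IH]; first exact: subsetT.
by rewrite iterS; apply: A_stable_sub_step.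
Qed.

Lemma B_stable_step U : B_stable Q U -> B_stable Q (RA_step Q U).
Proof.
move=> stU; have [k0 | k_pos] := posnP (RA_k Q U); first by rewrite RA_step0.
have [_ kX] := RA_k_spec k_pos; have U'_card := card_RA_step k_pos.
rewrite RA_stepS // in U'_card *; set k := RA_k Q U in k_pos kX U'_card *.
set X := RA_X Q U k in kX U'_card *.
move=> T TU' T0 gain.
have XU : X \subset U := RA_X_sub Q U k.
have X_card := subset_leq_card XU; have Un := leq_card_ord U.
have T_pos : 0 < #|T| by rewrite card_gt0.
have [TX0 | TX0] := eqVneq (T :\: X) set0; last first.
  have TXU : T :\: X \subset ~: U.
    apply/subsetP => v /setDP[vT vX].
    by move: (subsetP TU' v vT); rewrite !in_setC in_setD (negbTE vX).
  have T_card := cardsID X T; have := subset_leq_card (subsetIr T X) => TX_card.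
  have j_pos : 0 < #|U :\: X| + #|T| by lia.
  have j_le : #|U :\: X| + #|T| <= #|U| + #|T :\: X| by lia.
  have k_ge : n - #|U| <= n - #|U :\: X| by lia.
  apply: (B_stable_weaken stU TXU TX0 j_pos j_le k_ge (leq_subr _ _)).
  by move=> v /setDP[vT _]; apply: gain.
have TX : T \subset X by rewrite -setD_eq0 TX0.
have TX_card := subset_leq_card TX.
have j_pos : 0 < n - #|U| + k by lia.
have j_le : n - #|U| + k <= n - #|U :\: X| by lia.
have k_pos' : 0 < #|U :\: X| + #|T| by lia.
have k_le : #|U :\: X| + #|T| <= #|U| by lia.
have dB : indom n (B, n - #|U :\: X|) by rewrite indomE; lia.
have dA : indom n (A, #|U :\: X| + #|T|) by rewrite indomE; lia.
have [v vT] := set0Pn _ T0.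
have leave : Q v (B, n - #|U| + k) (A, #|U|).
  by move: (subsetP TX v vT); rewrite inE => /andP[].
have B_first := monotonic_weaken (MQ v) j_pos j_le (leq_subr _ _) k_pos' k_le Un leave.
by move: (monotonic_asym (MQ v) dB dA B_first); rewrite gain.
Qed.

Lemma RA_final_B_stable : B_stable Q (RA_final Q).
Proof.
suff stable_iter m : B_stable Q (iter m (RA_step Q) [set: 'I_n]) by exact: stable_iter.
elim: m => [|m IH]; last by rewrite iterS; apply: B_stable_step.
by move=> T /=; rewrite setCT subset0 => /eqP ->; rewrite eqxx.
Qed.

Lemma RA_stable : stable Q (RA Q).
Proof. exact: stable_assignA RA_final_A_stable RA_final_B_stable. Qed.

End Stability.

Arguments RA_final_A_stable {n} Q.

Section Agreement.
Variables (n : nat) (P1 P2 : profile n) (i : 'I_n).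
Hypothesis agree : forall v, v != i -> P1 v = P2 v.
Implicit Type U : {set 'I_n}.

Lemma RA_X_agree_sub U j : i \notin RA_X P1 U j -> RA_X P1 U j \subset RA_X P2 U j.
Proof.
move=> iX; apply/subsetP => v vX; have vi : v != i by apply: contraNneq iX => <-.
by move: vX; rewrite !inE agree.
Qed.

Lemma RA_k_agree_le U : i \in RA_step P1 U -> RA_k P1 U <= RA_k P2 U.
Proof.
case: (posnP (RA_k P1 U)) => [-> // | k_pos].
rewrite RA_stepS // => /setDP[_ iX].
have [kU kX] := RA_k_spec k_pos.
exact: RA_k_max k_pos kU (leq_trans kX (subset_leq_card (RA_X_agree_sub iX))).
Qed.

Lemma RA_final_A_stable_notin : i \notin RA_final P1 -> A_stable P2 (RA_final P1).
Proof.
move=> iV; suff agree_V v : v \in RA_final P1 -> P1 v = P2 v.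
  exact: A_stable_agree agree_V (RA_final_A_stable P1).
by move=> vV; apply: agree; apply: contraNneq iV => <-.
Qed.

Lemma RA_final_B_stable_in : monotonic_profile P1 ->
  i \in RA_final P1 -> B_stable P2 (RA_final P1).
Proof.
move=> MP1 iV; suff agree_V v : v \in ~: RA_final P1 -> P1 v = P2 v.
  exact: B_stable_agree agree_V (RA_final_B_stable MP1).
by move=> vV; apply: agree; apply: contraTneq vV => ->; rewrite inE iV.
Qed.

Lemma RA_final_sub_notin : monotonic_profile P2 ->
  i \notin RA_final P1 -> RA_final P1 \subset RA_final P2.
Proof.
by move=> MP2 iV; apply: (A_stable_sub_RA_final MP2); apply: RA_final_A_stable_notin.
Qed.

End Agreement.

Lemma RA_step_agree n (P1 P2 : profile n) (i : 'I_n) (U : {set 'I_n}) :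
  (forall v, v != i -> P1 v = P2 v) ->
  i \in RA_step P1 U -> i \in RA_step P2 U -> RA_step P1 U = RA_step P2 U.
Proof.
move=> agree i1 i2; have agree' v : v != i -> P2 v = P1 v by move/agree.
have ek : RA_k P1 U = RA_k P2 U.
  by apply/eqP; rewrite eqn_leq (RA_k_agree_le agree i1) (RA_k_agree_le agree' i2).
case: (posnP (RA_k P1 U)) => [k0 | k_pos]; first by rewrite !RA_step0 // -ek.
move: i1 i2; rewrite !RA_stepS -?ek // => /setDP[_ iX1] /setDP[_ iX2].
congr (U :\: _); apply/eqP; rewrite eqEsubset.
by rewrite (RA_X_agree_sub agree iX1) (RA_X_agree_sub agree' iX2).
Qed.

Lemma RA_final_agree_in n (P1 P2 : profile n) (i : 'I_n) :
  (forall v, v != i -> P1 v = P2 v) ->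
  i \in RA_final P1 -> i \in RA_final P2 -> RA_final P1 = RA_final P2.
Proof.
move=> agree.
suff iter_agree m : let run P := iter m (RA_step P) [set: 'I_n] in
    i \in run P1 -> i \in run P2 -> run P1 = run P2 by exact: iter_agree.
elim: m => [//|m /= IH] i1 i2.
have i1' := subsetP (RA_step_sub _ _) i i1; have i2' := subsetP (RA_step_sub _ _) i i2.
by rewrite (IH i1' i2') in i1 *; apply: (RA_step_agree agree i1 i2).
Qed.

Section Deviation.
Variables (n : nat) (P P' : profile n) (i : 'I_n).
Hypothesis MP : monotonic_profile P.
Hypothesis agree : forall v, v != i -> P v = P' v.
Variables V V' : {set 'I_n}.

Lemma B_stable_after_leaving : B_stable P V -> B_stable P' V' -> V' \subset V ->
  P i (B, n - #|V'|) (A, #|V|) -> B_stable P V'.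
Proof.
move=> stV stV' V'V gain T TV' T0 join.
have V_card := cardsID V' V; rewrite (setIidPr V'V) in V_card.
have TV_sub : T :&: V \subset V :\: V'.
  by apply/subsetP => v /setIP[vT vV]; rewrite in_setD vV andbT -in_setC (subsetP TV').
have TV_card := subset_leq_card TV_sub; have T_card := cardsID V T.
have T_pos : 0 < #|T| by rewrite card_gt0.
have Vn := leq_card_ord V.
have [TV0 | TV0] := eqVneq (T :\: V) set0; last first.
  have TV : T :\: V \subset ~: V by apply/subsetP => v /setDP[_]; rewrite inE.
  have j_pos : 0 < #|V'| + #|T| by lia.
  have j_le : #|V'| + #|T| <= #|V| + #|T :\: V| by lia.
  have k_ge : n - #|V| <= n - #|V'| by lia.
  apply: (B_stable_weaken MP stV TV TV0 j_pos j_le k_ge (leq_subr _ _)).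
  by move=> v /setDP[vT _]; apply: join.
have [iT | iT] := boolP (i \in T); last first.
  apply: (stV' T TV' T0) => v vT; rewrite -agree ?join //.
  by apply: contraNneq iT => <-.
have TV_empty : #|T :\: V| = 0 by rewrite TV0 cards0.
have j_pos : 0 < #|V'| + #|T| by lia.
have j_le : #|V'| + #|T| <= #|V| by lia.
have dA : indom n (A, #|V'| + #|T|) by rewrite indomE j_pos (leq_trans j_le Vn).
have dB : indom n (B, n - #|V'|) by rewrite indomE leq_subr andbT; lia.
have dV : indom n (A, #|V|) by rewrite indomE Vn andbT (leq_trans j_pos j_le).
have := monotonic_nogain (MP i) A j_pos j_le Vn.
by rewrite (monotonic_trans (MP i) dA dB dV (join i iT) gain).
Qed.

Lemma A_stable_after_joining : A_stable P V -> A_stable P' V' -> V \subset V' ->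
  P i (A, #|V'|) (B, n - #|V|) -> A_stable P V'.
Proof.
move=> stV stV' VV' gain S SV' S0 leave.
have V'_card := cardsID V V'; rewrite (setIidPr VV') in V'_card.
have SV_card := subset_leq_card (setSD V SV'); have S_card := cardsID V S.
have S_pos : 0 < #|S| by rewrite card_gt0.
have V'n := leq_card_ord V'.
have [SV0 | SV0] := eqVneq (S :&: V) set0; last first.
  have j_pos : 0 < n - #|V'| + #|S| by lia.
  have j_le : n - #|V'| + #|S| <= n - #|V| + #|S :&: V| by lia.
  apply: (A_stable_weaken MP stV (subsetIr S V) SV0 j_pos j_le (subset_leq_card VV') V'n).
  by move=> v /setIP[vS _]; apply: leave.
have [iS | iS] := boolP (i \in S); last first.
  apply: (stV' S SV' S0) => v vS; rewrite -agree ?leave //.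
  by apply: contraNneq iS => <-.
have SV_empty : #|S :&: V| = 0 by rewrite SV0 cards0.
have j_pos : 0 < n - #|V'| + #|S| by lia.
have j_le : n - #|V'| + #|S| <= n - #|V| by lia.
have dB : indom n (B, n - #|V'| + #|S|) by rewrite indomE j_pos; lia.
have dA : indom n (A, #|V'|) by rewrite indomE V'n andbT; lia.
have dV : indom n (B, n - #|V|) by rewrite indomE leq_subr andbT; lia.
have := monotonic_nogain (MP i) B j_pos j_le (leq_subr _ _).
by rewrite (monotonic_trans (MP i) dB dA dV (leave i iS) gain).
Qed.

End Deviation.

Lemma RA_deviation_stable n (P P' : profile n) (i : 'I_n) :
  monotonic_profile P -> monotonic_profile P' -> (forall v, v != i -> P v = P' v) ->
  prefers (P i) i (RA P') (RA P) -> RA_final P' != RA_final P -> stable P (RA P').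
Proof.
move=> MP MP' agree gain neV; have agree' v : v != i -> P' v = P v by move/agree.
move: gain; rewrite /prefers !RA_assignA !csize_assignA !ffunE.
case iV : (i \in RA_final P); case iV' : (i \in RA_final P') => /= gain.
- by case/eqP: neV; symmetry; apply: RA_final_agree_in agree iV iV'.
- have AV' := RA_final_A_stable_notin agree' (negbT iV').
  have V'V := RA_final_sub_notin agree' MP (negbT iV').
  have BV' := B_stable_after_leaving MP agree
    (RA_final_B_stable MP) (RA_final_B_stable MP') V'V gain.
  by apply: (stable_assignA MP).
- have VV' := RA_final_sub_notin agree MP' (negbT iV).
  have AV' := A_stable_after_joining MP agree
    (RA_final_A_stable P) (RA_final_A_stable P') VV' gain.
  have BV' := RA_final_B_stable_in agree' MP' iV'.
  by apply: (stable_assignA MP).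
- case/eqP: neV; apply/eqP; rewrite eqEsubset.
  rewrite (RA_final_sub_notin agree MP' (negbT iV)).
  by rewrite (RA_final_sub_notin agree' MP (negbT iV')).
Qed.

Theorem lemma1 (n : nat) :
  strategyproof_over (@RA n) (@unique_stable_domain n).
Proof.
move=> P [MP [f [_ uniq_f]]] i r' Mr'; apply/negP => gain.
set P' := update P i r'.
have MP' : monotonic_profile P' by move=> j; rewrite /P' /update; case: eqP.
have agree v : v != i -> P v = P' v by rewrite /P' /update => /negbTE ->.
have [eV | neV] := eqVneq (RA_final P') (RA_final P).
  move: gain; rewrite /prefers !RA_assignA eV.
  by rewrite (negbTE (monotonic_irr (MP i) (indom_csize _ _))).
have stV' := RA_deviation_stable MP MP' agree gain neV.
case/eqP: neV; apply: assignA_inj; rewrite -!RA_assignA.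
by rewrite -(uniq_f _ stV') (uniq_f _ (RA_stable MP)).
Qed.
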